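(* Let $I$ be an index set and $(p_i)_{i\in I}$ pairwise distinct complex parameters with associated variables $\xi_{p_i}$, and let $B_{p_ip_j}$ ($i\neq j$) be smooth scalar functions of all the $\xi_{p_i}$. With $\mathcal L_{abc}$ as defined below, consider the 3-form $\mathsf L=\sum_{i,j,k\in I,\ \text{distinct}}\mathcal L_{p_ip_jp_k}\,d\xi_{p_i}\wedge d\xi_{p_j}\wedge d\xi_{p_k}$. Then $d\mathsf L=\sum_{i,j,k,l\in I}\mathcal A_{p_ip_jp_kp_l}\,d\xi_{p_i}\wedge d\xi_{p_j}\wedge d\xi_{p_k}\wedge d\xi_{p_l}$ where each coefficient $\mathcal A$ for four distinct labels is a sum of products of two factors of the form $\Gamma_{a;bc}=\partial_{\xi_a}B_{bc}-B_{ba}B_{ac}$ (with $a,b,c$ among the four labels); hence $d\mathsf L$ has a double zero on solutions of the system $\partial_{\xi_a}B_{bc}=B_{ba}B_{ac}$ (all distinct $a,b,c$), and $d\mathsf L=0$ on such solutions.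
   Context: For pairwise distinct labels $a,b,c$: $\mathcal L_{abc}=\tfrac12(B_{cb}\partial_aB_{bc}-B_{bc}\partial_aB_{cb})+\tfrac12(B_{ba}\partial_cB_{ab}-B_{ab}\partial_cB_{ba})+\tfrac12(B_{ac}\partial_bB_{ca}-B_{ca}\partial_bB_{ac})+B_{ca}B_{ab}B_{bc}-B_{cb}B_{ba}B_{ac}$, with $\partial_a=\partial/\partial\xi_a$. (This $\mathcal L_{abc}$ is totally antisymmetric in $a,b,c$.) *)

From HB Require Import structures.
From mathcomp Require Import all_boot all_order all_algebra all_fingroup.
From mathcomp Require Import all_classical all_reals all_analysis.
Set Implicit Arguments. Unset Strict Implicit. Unset Printing Implicit Defensive.
Import Order.TTheory GRing.Theory Num.Theory.
Import numFieldNormedType.Exports.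
Local Open Scope ring_scope.

Section Defs.
Variables (R : realType) (n : nat).

(* coordinate direction e_a in R^n (variables xi_0 .. xi_{n-1}) *)
Definition dir (a : 'I_n) : 'rV[R]_n := \row_j (j == a)%:R.

Definition pd (a : 'I_n) (f : 'rV[R]_n -> R) : 'rV[R]_n -> R :=
  fun x => derive f x (dir a).

Definition iter_pd (l : seq 'I_n) (f : 'rV[R]_n -> R) : 'rV[R]_n -> R :=
  foldr pd f l.

Definition smooth (f : 'rV[R]_n -> R) : Prop :=
  forall l : seq 'I_n,
    (forall (x : 'rV[R]_n) (a : 'I_n), derivable (iter_pd l f) x (dir a)) /\
    continuous (iter_pd l f).

Definition distinct3 (a b c : 'I_n) : bool := [&& a != b, a != c & b != c].
Definition distinct4 (a b c d : 'I_n) : bool :=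
  [&& distinct3 a b c, a != d, b != d & c != d].

Variable B : 'I_n -> 'I_n -> 'rV[R]_n -> R.

Definition Lcal (a b c : 'I_n) (x : 'rV[R]_n) : R :=
  2^-1 * (B c b x * pd a (B b c) x - B b c x * pd a (B c b) x)
+ 2^-1 * (B b a x * pd c (B a b) x - B a b x * pd c (B b a) x)
+ 2^-1 * (B a c x * pd b (B c a) x - B c a x * pd b (B a c) x)
+ B c a x * B a b x * B b c x - B c b x * B b a x * B a c x.

(* coefficients of the 3-form L = sum_{i,j,k distinct} L_{ijk} dxi_i^dxi_j^dxi_k *)
Definition Lcoef (i j k : 'I_n) : 'rV[R]_n -> R :=
  if distinct3 i j k then Lcal i j k else (fun _ => 0).

(* coefficients of dL = sum_{l,i,j,k} d_l L_{ijk} dxi_l^dxi_i^dxi_j^dxi_k *)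
Definition dLcoef (l i j k : 'I_n) : 'rV[R]_n -> R := pd l (Lcoef i j k).

Definition Gamma (a b c : 'I_n) (x : 'rV[R]_n) : R :=
  pd a (B b c) x - B b a x * B a c x.

End Defs.

Definition lab4 (n : nat) (a b c d : 'I_n) (k : 'I_4) : 'I_n := nth a [:: a; b; c; d] k.

(* Component of the 4-form sum_{i,j,k,l} C_{ijkl} dxi_i^dxi_j^dxi_k^dxi_l on
   dxi_a^dxi_b^dxi_c^dxi_d: the alternating sum of the coefficients.  Two such
   expressions define the same 4-form iff these components agree for all a,b,c,d. *)
Definition alt4 (R : realType) (n : nat) (C : 'I_n -> 'I_n -> 'I_n -> 'I_n -> R)
  (a b c d : 'I_n) : R :=
  \sum_(s : 'S_4) (-1) ^+ s *
    C (lab4 a b c d (s 0)) (lab4 a b c d (s 1)) (lab4 a b c d (s 2)) (lab4 a b c d (s 3)).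

Definition distinct_pos (t : 'I_4 * 'I_4 * 'I_4) : bool :=
  [&& t.1.1 != t.1.2, t.1.1 != t.2 & t.1.2 != t.2].

From HB Require Import structures.
From mathcomp Require Import all_boot all_order all_algebra all_fingroup.
From mathcomp Require Import all_classical all_reals all_analysis.
From mathcomp Require Import ring lra.
Set Implicit Arguments. Unset Strict Implicit. Unset Printing Implicit Defensive.
Import Order.TTheory GRing.Theory Num.Theory.
Import numFieldNormedType.Exports.
Local Open Scope ring_scope.

(* By the product rule every coefficient [d_l L_ijk] of dL is a polynomial in
   the [B]'s and their first and second derivatives.  Once mixed partials are
   identified (Schwarz's theorem, from two applications of the mean value theorem), the
   alternation over four distinct labels kills every second derivative, and
   after substituting [d_a B_bc = Gamma_a;bc + B_ba B_ac] what remains is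
   [24 * Gamma_quad], where [Gamma_quad] is an alternating quadratic form in
   the [Gamma]'s.  As a 4-form only sees the alternation of its coefficients,
   [A := Gamma_quad] works for all labels, and it vanishes on solutions of
   [d_a B_bc = B_ba B_ac] because every [Gamma] with distinct labels does. *)

Lemma sum_perm_lift (V : zmodType) n (G : 'S_n.+1 -> V) :
  \sum_(s : 'S_n.+1) G s = \sum_(j < n.+1) \sum_(s : 'S_n) G (lift_perm ord0 j s).
Proof.
rewrite (partition_big (fun s : 'S_n.+1 => s ord0) xpredT) //=.
apply: eq_bigr => j _.
rewrite (reindex (lift_perm ord0 j)); last first.
  pose unlift_perm_fun i (s : 'S_n.+1) k := odflt k (unlift (s i) (s (lift i k))).
  have unlift_permK i (s : 'S_n.+1) k : lift (s i) (unlift_perm_fun i s k) = s (lift i k).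
    rewrite /unlift_perm_fun; have:= neq_lift i k.
    by rewrite -(can_eq (permK s)) => /unlift_some[] ? ? ->.
  have unlift_perm_inj : injective (unlift_perm_fun ord0 _).
    move=> s; apply: can_inj (unlift_perm_fun (s ord0) s^-1%g) _ => k'.
    by rewrite {1}/unlift_perm_fun unlift_permK !permK liftK.
  exists (fun s => perm (unlift_perm_inj s)) => [s _ | s].
    apply/permP=> k'.
    by rewrite permE /unlift_perm_fun lift_perm_lift lift_perm_id liftK.
  move/(s _ =P _) => si0; apply/permP=> k.
  case: (unliftP ord0 k) => [k'|] ->; rewrite ?lift_perm_id //.
  by rewrite lift_perm_lift -si0 permE unlift_permK.
by apply: eq_big => [s | s _] //; rewrite lift_perm_id eqxx.
Qed.

Lemma sum_perm1 (V : zmodType) (G : 'S_1 -> V) : \sum_(s : 'S_1) G s = G 1%g.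
Proof.
rewrite (eq_bigr (fun=> G 1%g)) ?sumr_const ?card_Sn // => s _.
by congr G; apply/permP => i; rewrite [LHS]ord1 [RHS]ord1.
Qed.

Section Alt4.
Variables (R : realType) (n : nat) (C : 'I_n -> 'I_n -> 'I_n -> 'I_n -> R).

Lemma alt4E a b c d :
  alt4 C a b c d =
    C a b c d - C a b d c - C a c b d + C a c d b + C a d b c - C a d c b
  - C b a c d + C b a d c + C b c a d - C b c d a - C b d a c + C b d c a
  + C c a b d - C c a d b - C c b a d + C c b d a + C c d a b - C c d b a
  - C d a b c + C d a c b + C d b a c - C d b c a - C d c a b + C d c b a.
Proof.
rewrite /alt4.
have -> : (3 : 'I_4) = lift ord0 (lift ord0 (lift ord0 (ord0 : 'I_1))) by apply/val_inj.
have -> : (2 : 'I_4) = lift ord0 (lift ord0 (ord0 : 'I_2)) by apply/val_inj.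
have -> : (1 : 'I_4) = lift ord0 ord0 by apply/val_inj.
have -> : (0 : 'I_4) = ord0 by apply/val_inj.
rewrite sum_perm_lift; under eq_bigr => j _ do
  (rewrite sum_perm_lift; under eq_bigr => k _ do
    (rewrite sum_perm_lift; under eq_bigr => l _ do rewrite sum_perm1)).
rewrite /= !big_ord_recl !big_ord0 /= !odd_lift_perm.
rewrite !lift_perm_id ?lift_perm_lift ?lift_perm_id ?lift_perm_lift ?lift_perm_id.
by rewrite ?lift_perm_lift ?perm1 ?odd_perm1 /lab4 /=; ring.
Qed.

Lemma alt4_eq0 a b c d : ~~ distinct4 a b c d -> alt4 C a b c d = 0.
Proof.
move=> nd; rewrite alt4E.
have [->|ab] := eqVneq a b; first ring.
have [->|ac] := eqVneq a c; first ring.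
have [->|ad] := eqVneq a d; first ring.
have [->|bc] := eqVneq b c; first ring.
have [->|bd] := eqVneq b d; first ring.
have [->|cd] := eqVneq c d; first ring.
by rewrite /distinct4 /distinct3 ab ac ad bc bd cd in nd.
Qed.

End Alt4.

Section SymmetryOfSecondDerivatives.
Variables (R : realType) (n : nat).
Notation V := 'rV[R]_n.
Implicit Types (f g : V -> R) (x y v : V) (a d : 'I_n).

Lemma is_derive_line g y v (t : R) : derivable g (y + t *: v) v ->
  is_derive t 1 (fun s : R => g (y + s *: v)) ('D_v g (y + t *: v)).
Proof.
move=> dg.
have E : (fun h : R => h^-1 *: (((fun s => g (y + s *: v)) \o shift t) (h *: 1)
                                 - g (y + t *: v)))
       = (fun h : R => h^-1 *: ((g \o shift (y + t *: v)) (h *: v) - g (y + t *: v))).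
  apply/funext => h /=; congr (_ *: (g _ - _)).
  by rewrite [h *: 1]mulr1 scalerDl addrCA addrC.
by split; [rewrite /derivable E | rewrite /derive E].
Qed.

Lemma norm_dir a : `|dir R a| <= 1.
Proof.
rewrite [leLHS]/Num.norm /= mx_normrE.
by apply: bigmax_le => // ij _; rewrite /dir mxE; case: (_ == _); rewrite ?normr1 ?normr0.
Qed.

Definition mixed_difference f x a d (h : R) :=
  f (x + h *: dir R d + h *: dir R a) - f (x + h *: dir R a) - f (x + h *: dir R d) + f x.

Lemma mixed_differenceC f x a d h :
  mixed_difference f x a d h = mixed_difference f x d a h.
Proof. by rewrite /mixed_difference (addrAC x); ring. Qed.

(* Two applications of the mean value theorem, first along [a], then along [d]. *)
Lemma mixed_difference_mean_value f x a d (h : R) :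
  (forall y, derivable f y (dir R a)) -> (forall y, derivable (pd a f) y (dir R d)) ->
  0 < h ->
  exists2 p, `|x - p| < h * 2 & mixed_difference f x a d h = h * h * pd d (pd a f) p.
Proof.
move=> df dfa h0; set u := dir R a; set w := dir R d.
pose F (s : R) := f (x + h *: w + s *: u) - f (x + s *: u).
pose dF (s : R) := pd a f (x + h *: w + s *: u) - pd a f (x + s *: u).
have DF (s : R) : is_derive s 1 F (dF s) by apply: is_deriveB; apply: is_derive_line.
have [s s_in EF] : exists2 s, s \in `]0, h[ & F h - F 0 = dF s * (h - 0).
  apply: (@MVT R F dF 0 h h0).
  by apply: derivable_within_continuous => s' _; case: (DF s').
pose G (t : R) := pd a f (x + s *: u + t *: w).
pose dG (t : R) := pd d (pd a f) (x + s *: u + t *: w).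
have DG (t : R) : is_derive t 1 G (dG t) by apply: is_derive_line.
have [t t_in EG] : exists2 t, t \in `]0, h[ & G h - G 0 = dG t * (h - 0).
  apply: (@MVT R G dG 0 h h0).
  by apply: derivable_within_continuous => t' _; case: (DG t').
exists (x + s *: u + t *: w).
  move: s_in t_in; rewrite !in_itv /= => /andP[s0 sh] /andP[t0 th].
  rewrite -addrA opprD addrA subrr add0r normrN.
  apply: (le_lt_trans (ler_normD _ _)); rewrite !normrZ !gtr0_norm //.
  have := norm_dir a; have := norm_dir d; rewrite -/u -/w => nw nu.
  have : s * `|u| <= s by rewrite -[leRHS]mulr1 ler_wpM2l // ltW.
  have : t * `|w| <= t by rewrite -[leRHS]mulr1 ler_wpM2l // ltW.
  lra.
have -> : mixed_difference f x a d h = F h - F 0.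
  by rewrite /mixed_difference /F !scale0r !addr0; ring.
rewrite EF; have -> : dF s = G h - G 0 by rewrite /dF /G scale0r addr0 (addrAC x).
by rewrite EG subr0 /dG; ring.
Qed.

Lemma eq_at_of_near_equal_values (u v : V -> R) x :
  {for x, continuous u} -> {for x, continuous v} ->
  (forall r, 0 < r -> exists p q, [/\ `|x - p| < r, `|x - q| < r & u p = v q]) ->
  u x = v x.
Proof.
move=> cu cv near_eq.
apply/eqP; rewrite -subr_eq0 -normr_le0; apply/ler_addgt0Pr => e e0; rewrite add0r.
have e20 : 0 < e / 2 by rewrite divr_gt0.
have near_u : \forall y \near x, `|u x - u y| < e / 2.
  exact: (cvgr_dist_lt _ _ cu _ e20).
have near_v : \forall y \near x, `|v x - v y| < e / 2.
  exact: (cvgr_dist_lt _ _ cv _ e20).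
have [r /= r0 near_x] := (nbhs_normP _ _).1 (filterI near_u near_v).
have [p [q [xp xq upq]]] := near_eq r r0.
have [ux _] := near_x p xp; have [_ vx] := near_x q xq.
have : `|u x - v x| <= `|u x - u p| + `|v x - v q|.
  have -> : u x - v x = (u x - u p) - (v x - v q) by rewrite upq; ring.
  exact: ler_normB.
lra.
Qed.

Lemma pd_comm f a d x : smooth f -> pd d (pd a f) x = pd a (pd d f) x.
Proof.
move=> sf.
have [df _] := sf [::]; have [dfa _] := sf [:: a]; have [dfd _] := sf [:: d].
have [_ cont_ad] := sf [:: d; a]; have [_ cont_da] := sf [:: a; d].
apply: eq_at_of_near_equal_values; [exact: cont_ad|exact: cont_da|move=> r r0].
have h0 : 0 < r / 4 by rewrite divr_gt0.
have hr : r / 4 * 2 < r by lra.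
have [p xp Ep] := mixed_difference_mean_value x (df^~ a) (dfa^~ d) h0.
have [q xq Eq] := mixed_difference_mean_value x (df^~ d) (dfd^~ a) h0.
exists p, q; split; [exact: lt_trans hr|exact: lt_trans hr|].
have := etrans (esym Ep) (etrans (mixed_differenceC f x a d (r / 4)) Eq).
by apply: mulfI; rewrite mulf_neq0 // gt_eqF.
Qed.

End SymmetryOfSecondDerivatives.

Definition table_coef (T : eqType) (s : seq (T * T * rat)) (t1 t2 : T) : rat :=
  \sum_(p <- s | (p.1.1 == t1) && (p.1.2 == t2)) p.2.

Lemma sum_table_coef (R : numFieldType) (T : finType) (P : pred T)
    (s : seq (T * T * rat)) (F : T -> T -> R) :
  all (fun p => P p.1.1 && P p.1.2) s ->
  \sum_(t1 | P t1) \sum_(t2 | P t2) ratr (table_coef s t1 t2) * F t1 t2 =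
  \sum_(p <- s) ratr p.2 * F p.1.1 p.1.2.
Proof.
move=> /allP sP.
under eq_bigr => t1 _ do under eq_bigr => t2 _ do
  rewrite /table_coef rmorph_sum mulr_suml big_mkcond /=.
rewrite exchange_big /=; under eq_bigr => t1 _ do rewrite exchange_big /=.
rewrite exchange_big /=; apply: eq_big_seq => p; move/sP => /andP[P1 P2].
rewrite (bigD1 p.1.2) //= (bigD1 p.1.1) //= !eqxx big1 ?addr0; last first.
  by move=> t /andP[_ /negbTE t1F]; rewrite eq_sym t1F.
rewrite big1 ?addr0 // => t /andP[_ /negbTE t2F].
by rewrite big1 // => t1 _; rewrite [p.1.2 == t]eq_sym t2F andbF.
Qed.

Definition kappa_table : seq ('I_4 * 'I_4 * 'I_4 * ('I_4 * 'I_4 * 'I_4) * rat) :=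
  [:: (0, 1, 2, (3, 2, 1), - 4^-1); (0, 1, 3, (2, 3, 1), 4^-1);
      (0, 2, 1, (3, 1, 2), 4^-1);   (0, 2, 3, (1, 3, 2), - 4^-1);
      (0, 3, 1, (2, 1, 3), - 4^-1); (0, 3, 2, (1, 2, 3), 4^-1);
      (1, 0, 2, (3, 2, 0), 4^-1);   (1, 0, 3, (2, 3, 0), - 4^-1);
      (1, 2, 0, (3, 0, 2), - 4^-1); (1, 3, 0, (2, 0, 3), 4^-1);
      (2, 0, 1, (3, 1, 0), - 4^-1); (2, 1, 0, (3, 0, 1), 4^-1)].

Definition kappa : 'I_4 * 'I_4 * 'I_4 -> 'I_4 * 'I_4 * 'I_4 -> rat :=
  table_coef kappa_table.

Section GammaQuadratic.
Variables (R : realType) (n : nat) (g : 'I_n -> 'I_n -> 'I_n -> R).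

(* [Gamma_quad a b c d = -1/8 * \sum_(s : 'S_4) sgn s * g s0 s1 s2 * g s3 s2 s1],
   with [s0 .. s3] the labels permuted by [s]; in particular it is alternating. *)
Definition Gamma_quad (a b c d : 'I_n) : R := 4^-1 *
  (- g a b c * g d c b + g a b d * g c d b + g a c b * g d b c - g a c d * g b d c
   - g a d b * g c b d + g a d c * g b c d + g b a c * g d c a - g b a d * g c d a
   - g b c a * g d a c + g b d a * g c a d - g c a b * g d b a + g c b a * g d a b).

Lemma alt4_Gamma_quad a b c d : alt4 Gamma_quad a b c d = 24 * Gamma_quad a b c d.
Proof. by rewrite alt4E /Gamma_quad; field. Qed.

Lemma sum_kappa_Gamma_quad a b c d :
  \sum_(t1 | distinct_pos t1) \sum_(t2 | distinct_pos t2)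
     ratr (kappa t1 t2) *
     g (lab4 a b c d t1.1.1) (lab4 a b c d t1.1.2) (lab4 a b c d t1.2) *
     g (lab4 a b c d t2.1.1) (lab4 a b c d t2.1.2) (lab4 a b c d t2.2)
  = Gamma_quad a b c d.
Proof.
under eq_bigr => t1 _ do under eq_bigr => t2 _ do rewrite -mulrA.
rewrite sum_table_coef // /kappa_table !big_cons big_nil /Gamma_quad /lab4 /=.
by rewrite !rmorphN !fmorphV !rmorph_nat; ring.
Qed.

Lemma Gamma_quad_eq0 a b c d : distinct4 a b c d ->
  (forall p q r, distinct3 p q r -> g p q r = 0) -> Gamma_quad a b c d = 0.
Proof.
case/and4P => /and3P[ab ac bc] ad bd cd g0.
have [ba ca da] : [/\ b != a, c != a & d != a] by split; rewrite eq_sym.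
have [cb db dc] : [/\ c != b, d != b & d != c] by split; rewrite eq_sym.
rewrite /Gamma_quad !g0;
  try by rewrite /distinct3 ?ab ?ac ?ad ?bc ?bd ?cd ?ba ?ca ?da ?cb ?db ?dc.
by ring.
Qed.

End GammaQuadratic.

Section PartialDerivativeRules.
Variables (R : realType) (n : nat).
Implicit Types (f g : 'rV[R]_n -> R) (l : 'I_n) (x : 'rV[R]_n).

Definition partially_derivable f := forall x l, derivable f x (dir R l).

Lemma partially_derivableD f g : partially_derivable f -> partially_derivable g ->
  partially_derivable (fun y => f y + g y).
Proof. by move=> df dg x l; apply: derivableD. Qed.

Lemma partially_derivableN f : partially_derivable f ->
  partially_derivable (fun y => - f y).
Proof. by move=> df x l; apply: derivableN. Qed.

Lemma partially_derivableM f g : partially_derivable f -> partially_derivable g ->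
  partially_derivable (fun y => f y * g y).
Proof. by move=> df dg x l; apply: derivableM. Qed.

Lemma partially_derivable_cst (k : R) : partially_derivable (fun=> k).
Proof. by move=> x l; apply: derivable_cst. Qed.

Lemma pdD f g l x : partially_derivable f -> partially_derivable g ->
  pd l (fun y => f y + g y) x = pd l f x + pd l g x.
Proof. by move=> df dg; apply: deriveD. Qed.

Lemma pdN f l x : partially_derivable f -> pd l (fun y => - f y) x = - pd l f x.
Proof. by move=> df; apply: deriveN. Qed.

Lemma pdM f g l x : partially_derivable f -> partially_derivable g ->
  pd l (fun y => f y * g y) x = pd l f x * g x + f x * pd l g x.
Proof. by move=> df dg; rewrite /pd deriveM // addrC mulrC. Qed.

Lemma pdMl (k : R) f l x : partially_derivable f ->
  pd l (fun y => k * f y) x = k * pd l f x.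
Proof. by move=> df; apply: deriveMl. Qed.

End PartialDerivativeRules.

#[local] Hint Resolve partially_derivableD partially_derivableN partially_derivableM
  partially_derivable_cst : core.

Section ExteriorDerivative.
Variables (R : realType) (n : nat) (B : 'I_n -> 'I_n -> 'rV[R]_n -> R).
Hypothesis B_smooth : forall i j : 'I_n, i != j -> smooth (B i j).

Lemma partially_derivable_B i j : i != j -> partially_derivable (B i j).
Proof. by move=> /B_smooth /(_ [::]) []. Qed.

Lemma partially_derivable_pdB i j l : i != j -> partially_derivable (pd l (B i j)).
Proof. by move=> /B_smooth /(_ [:: l]) []. Qed.

#[local] Hint Resolve partially_derivable_B partially_derivable_pdB : core.

Lemma dLcoef_distinct l a b c x : distinct3 a b c ->
  dLcoef B l a b c x =
    2^-1 * (pd l (B c b) x * pd a (B b c) x + B c b x * pd l (pd a (B b c)) x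
          - (pd l (B b c) x * pd a (B c b) x + B b c x * pd l (pd a (B c b)) x))
  + 2^-1 * (pd l (B b a) x * pd c (B a b) x + B b a x * pd l (pd c (B a b)) x
          - (pd l (B a b) x * pd c (B b a) x + B a b x * pd l (pd c (B b a)) x))
  + 2^-1 * (pd l (B a c) x * pd b (B c a) x + B a c x * pd l (pd b (B c a)) x
          - (pd l (B c a) x * pd b (B a c) x + B c a x * pd l (pd b (B a c)) x))
  + ((pd l (B c a) x * B a b x + B c a x * pd l (B a b) x) * B b c x
     + B c a x * B a b x * pd l (B b c) x)
  - ((pd l (B c b) x * B b a x + B c b x * pd l (B b a) x) * B a c x
     + B c b x * B b a x * pd l (B a c) x).
Proof.
move=> D; rewrite /dLcoef /Lcoef D.
case/and3P: D => ab ac bc.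
have [ba ca cb] : [/\ b != a, c != a & c != b] by split; rewrite eq_sym.
rewrite /Lcal !pdD ?pdN ?pdMl ?pdM ?pdD ?pdN ?pdM; auto 10.
Qed.

Lemma alt4_dLcoef a b c d x : distinct4 a b c d ->
  alt4 (fun i j k l => dLcoef B i j k l x) a b c d =
  24 * Gamma_quad (fun i j k => Gamma B i j k x) a b c d.
Proof.
case/and4P => /and3P[ab ac bc] ad bd cd.
have [ba ca da] : [/\ b != a, c != a & d != a] by split; rewrite eq_sym.
have [cb db dc] : [/\ c != b, d != b & d != c] by split; rewrite eq_sym.
rewrite alt4E !dLcoef_distinct;
  try by rewrite /distinct3 ?ab ?ac ?ad ?bc ?bd ?cd ?ba ?ca ?da ?cb ?db ?dc.
(* The identity holds only modulo the symmetry of second derivatives; once all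
   values are abstracted it is a field identity. *)
have comm i j p q : i != j -> pd q (pd p (B i j)) x = pd p (pd q (B i j)) x.
  by move=> /B_smooth; apply: pd_comm.
move: (comm a b c d ab) (comm a c b d ac) (comm a d b c ad) (comm b a c d ba)
  (comm b c a d bc) (comm b d a c bd) (comm c a b d ca) (comm c b a d cb)
  (comm c d a b cd) (comm d a b c da) (comm d b a c db) (comm d c a b dc).
rewrite /Gamma_quad /Gamma.
repeat match goal with |- context [pd ?i (pd ?j (B ?k ?l)) x] =>
  generalize (pd i (pd j (B k l)) x); intro end.
repeat match goal with |- context [pd ?i (B ?k ?l) x] =>
  generalize (pd i (B k l) x); intro end.
repeat match goal with |- context [B ?k ?l x] => generalize (B k l x); intro end.
move=> -> -> -> -> -> -> -> -> -> -> -> ->.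
by field.
Qed.

End ExteriorDerivative.

Theorem corollary2p3 :
  exists kappa : 'I_4 * 'I_4 * 'I_4 -> 'I_4 * 'I_4 * 'I_4 -> rat,
  forall (R : realType) (n : nat) (B : 'I_n -> 'I_n -> 'rV[R]_n -> R),
    (forall i j : 'I_n, i != j -> smooth (B i j)) ->
    (exists A : 'I_n -> 'I_n -> 'I_n -> 'I_n -> 'rV[R]_n -> R,
       (forall (x : 'rV[R]_n) (a b c d : 'I_n),
          alt4 (fun i j k l => dLcoef B i j k l x) a b c d
          = alt4 (fun i j k l => A i j k l x) a b c d) /\
       (forall a b c d : 'I_n, distinct4 a b c d -> forall x : 'rV[R]_n,
          A a b c d x =
          \sum_(t1 | distinct_pos t1) \sum_(t2 | distinct_pos t2)
             ratr (kappa t1 t2) *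
             Gamma B (lab4 a b c d t1.1.1) (lab4 a b c d t1.1.2) (lab4 a b c d t1.2) x *
             Gamma B (lab4 a b c d t2.1.1) (lab4 a b c d t2.1.2) (lab4 a b c d t2.2) x)) /\
    ((forall (x : 'rV[R]_n) (a b c : 'I_n), distinct3 a b c ->
        pd a (B b c) x = B b a x * B a c x) ->
     forall (x : 'rV[R]_n) (a b c d : 'I_n),
       alt4 (fun i j k l => dLcoef B i j k l x) a b c d = 0).
Proof.
exists kappa => R n B B_smooth; split.
  exists (fun i j k l x => Gamma_quad (fun p q r => Gamma B p q r x) i j k l).
  split=> [x a b c d | a b c d _ x].
    have [D|nD] := boolP (distinct4 a b c d); last by rewrite !alt4_eq0.
    by rewrite alt4_dLcoef // alt4_Gamma_quad.
  exact: esym (sum_kappa_Gamma_quad (fun p q r => Gamma B p q r x) a b c d).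
move=> solution x a b c d.
have [D|nD] := boolP (distinct4 a b c d); last exact: alt4_eq0.
rewrite alt4_dLcoef // Gamma_quad_eq0 ?mulr0 // => p q r pqr.
by rewrite /Gamma solution // subrr.
Qed.
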